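(* Let $n \ge 2$, let $m_1,\dots,m_n>0$ be masses, and let $q_1=(x_1,y_1),\dots,q_n=(x_n,y_n)\in\mathbb{R}^2$ be pairwise distinct points. For $1\le i\neq j\le n$ let $v_{i,j}\in\mathbb{R}^{2n}$ be the twist vector defined in the context. Then the linear subspace of $\mathbb{R}^{2n}$ spanned by $\{v_{i,j} : 1\le i\neq j\le n\}$ has dimension $2n-3$, unless all $n$ points $q_1,\dots,q_n$ lie on a common line, in which case the dimension is $n-1$.
   Context: Configurations are written in flattened coordinates $(x_1,y_1,x_2,y_2,\ldots,x_n,y_n)\in\mathbb{R}^{2n}$. Write $x_{i,j}=x_i-x_j$ and $y_{i,j}=y_i-y_j$. The twist vector $v_{i,j}$ (for $i\neq j$) at the configuration $(q_1,\dots,q_n)$ is the vector in $\mathbb{R}^{2n}$ whose only possibly nonzero components are: the $x_i$-component $m_j y_{i,j}$, the $y_i$-component $-m_j x_{i,j}$, the $x_j$-component $-m_i y_{i,j}$, and the $y_j$-component $m_i x_{i,j}$; all other components are $0$. (It is the infinitesimal rotation of the pair $q_i,q_j$ about their center of mass.) *)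

From HB Require Import structures.
From mathcomp Require Import all_boot all_order all_algebra.
Set Implicit Arguments. Unset Strict Implicit. Unset Printing Implicit Defensive.
Import Order.TTheory GRing.Theory Num.Theory.
Local Open Scope ring_scope.

(* Configuration (q_1,...,q_n), q_i = (x i, y i), flattened as
   (x_1,y_1,...,x_n,y_n) in R^(2n): with 0-based indices, the x_i-component
   is coordinate 2*i and the y_i-component is coordinate 2*i+1. *)

Definition twist (R : pzRingType) (n : nat) (m x y : 'I_n -> R) (i j : 'I_n)
  : 'rV[R]_(2 * n) :=
  \row_(k < 2 * n)
    (if (k : nat) == (2 * i)%N then m j * (y i - y j)
     else if (k : nat) == (2 * i).+1 then - (m j * (x i - x j))
     else if (k : nat) == (2 * j)%N then - (m i * (y i - y j))
     else if (k : nat) == (2 * j).+1 then m i * (x i - x j)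
     else 0).

Definition twist_span (R : fieldType) (n : nat) (m x y : 'I_n -> R)
  : {vspace 'rV[R]_(2 * n)} :=
  <<[seq twist m x y i j
      | i <- enum 'I_n, j <- [seq j <- enum 'I_n | j != i]]>>%VS.

Definition collinear (R : pzRingType) (n : nat) (x y : 'I_n -> R) : Prop :=
  exists a b c : R, (a != 0 \/ b != 0) /\ forall i, a * x i + b * y i = c.

From HB Require Import structures.
From mathcomp Require Import all_boot all_order all_algebra.
From mathcomp Require Import zify ring.
Set Implicit Arguments. Unset Strict Implicit. Unset Printing Implicit Defensive.
Import Order.TTheory GRing.Theory Num.Theory.
Import VectorInternalTheory.
Local Open Scope ring_scope.

(* Write u in R^(2n) as u_k = m_k p_k.  Then u is orthogonal to v_{i,j} iff
   p_i - p_j is parallel to q_i - q_j, so the span has dimension 2n minus the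
   dimension of the space of such velocity fields p.  If three of the points
   form a nondegenerate triangle, then p_k = l q_k + c (a dilation plus a
   translation), a 3-dimensional space.  If all points lie on a line with
   normal (a, b), the condition only says that <(a, b), p_k> is independent
   of k, which leaves an (n+1)-dimensional space. *)

Lemma dimv_span_rank (F : fieldType) k (X : seq 'rV[F]_k) :
  \dim <<X>>%VS = \rank (\matrix_(l < size X) X`_l).
Proof.
rewrite /dimv [span]unlock /span_expanded_def /= genmxE.
have -> : b2mx (in_tuple X) = (\matrix_(l < size X) X`_l) *m lin1_mx v2r.
  apply/row_matrixP => l.
  by rewrite row_mul !rowK mul_rV_lin1 /= (tnth_nth 0).
apply: mxrankMfree; apply/inj_row_free => v.
by rewrite mul_rV_lin1 /= => /eqP; rewrite -(linear0 v2r) => /eqP /v2r_inj.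
Qed.

Lemma mulmx_tr_rows_eq0P (R : pzRingType) k (X : seq 'rV[R]_k) (u : 'rV[R]_k) :
  u *m (\matrix_(l < size X) X`_l)^T = 0 <-> {in X, forall v, (u *m v^T) 0 0 = 0}.
Proof.
have entry l : (u *m (\matrix_(l < size X) X`_l)^T) 0 l = (u *m (X`_l)^T) 0 0.
  by rewrite !mxE; apply: eq_bigr => c _; rewrite !mxE.
split=> [uX0 v /(nthP 0) [l lt_l <-] | uX0].
  by rewrite -(entry (Ordinal lt_l)) uX0 mxE.
by apply/rowP => l; rewrite entry uX0 ?mxE ?mem_nth.
Qed.

Lemma mxrank_kernel_image (F : fieldType) N k d (A : 'M[F]_(N, k))
    (f : 'rV[F]_d -> 'rV[F]_k) :
  linear f -> (forall w, f w = 0 -> w = 0) ->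
  (forall u, u *m A^T = 0 <-> exists w, u = f w) ->
  \rank A = (k - d)%N.
Proof.
move=> f_lin f_inj kerA.
pose fL : {linear _ -> _} := HB.pack f (GRing.isLinear.Build _ _ _ _ f f_lin).
pose B := lin1_mx fL.
have freeB : row_free B.
  by apply/inj_row_free => w; rewrite mul_rV_lin1; exact: f_inj.
have kerB : (kermx A^T == B)%MS.
  apply/andP; split.
    apply/row_subP => i.
    have /kerA [w ->] : row i (kermx A^T) *m A^T = 0.
      by rewrite -row_mul mulmx_ker row0.
    by rewrite -[f w](mul_rV_lin1 fL) submxMl.
  apply/sub_kermxP/row_matrixP => i.
  by rewrite row_mul row0 rowE mul_rV_lin1; apply/kerA; exists (delta_mx 0 i).
have := mxrank_ker A^T; rewrite (eqmx_rank kerB) mxrank_tr (eqP freeB).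
by have := rank_leq_col A; lia.
Qed.

Section Flattening.
Variable n : nat.

Fact xidx_subproof (i : 'I_n) : (2 * i < 2 * n)%N.
Proof. by have := ltn_ord i; lia. Qed.
Fact yidx_subproof (i : 'I_n) : ((2 * i).+1 < 2 * n)%N.
Proof. by have := ltn_ord i; lia. Qed.
Fact pidx_subproof (c : 'I_(2 * n)) : (c./2 < n)%N.
Proof. by have := ltn_ord c; lia. Qed.

Definition xidx i := Ordinal (xidx_subproof i).
Definition yidx i := Ordinal (yidx_subproof i).
Definition pidx c := Ordinal (pidx_subproof c).

Lemma pidx_x i : pidx (xidx i) = i.
Proof. by apply: val_inj => /=; lia. Qed.
Lemma pidx_y i : pidx (yidx i) = i.
Proof. by apply: val_inj => /=; lia. Qed.

Lemma sum_ord_double (V : nmodType) (F : 'I_(2 * n) -> V) :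
  \sum_c F c = \sum_i (F (xidx i) + F (yidx i)).
Proof.
rewrite (partition_big pidx predT) //; apply: eq_bigr => i _.
rewrite (bigD1 (xidx i)) ?pidx_x //= (big_pred1 (yidx i)) // => c /=.
by rewrite -!val_eqE /=; apply/idP/idP; lia.
Qed.

Variable R : pzRingType.

Definition flat (fx fy : 'I_n -> R) : 'rV[R]_(2 * n) :=
  \row_c (if odd c then fy (pidx c) else fx (pidx c)).

Lemma flat_x fx fy i : flat fx fy 0 (xidx i) = fx i.
Proof. by rewrite mxE /= oddM pidx_x. Qed.
Lemma flat_y fx fy i : flat fx fy 0 (yidx i) = fy i.
Proof. by rewrite mxE /= oddM pidx_y. Qed.

Lemma flatP (u v : 'rV[R]_(2 * n)) :
  (forall i, u 0 (xidx i) = v 0 (xidx i)) ->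
  (forall i, u 0 (yidx i) = v 0 (yidx i)) -> u = v.
Proof.
move=> eq_x eq_y; apply/rowP => c.
have [odd_c | even_c] := boolP (odd c).
  by have -> : c = yidx (pidx c) by apply: val_inj => /=; lia.
by have -> : c = xidx (pidx c) by apply: val_inj => /=; lia.
Qed.

Lemma eq_flat fx fy gx gy : fx =1 gx -> fy =1 gy -> flat fx fy = flat gx gy.
Proof. by move=> eq_x eq_y; apply: flatP => i; rewrite !(flat_x, flat_y). Qed.

Lemma flat_coord (u : 'rV[R]_(2 * n)) :
  flat (fun i => u 0 (xidx i)) (fun i => u 0 (yidx i)) = u.
Proof. by apply: flatP => i; rewrite (flat_x, flat_y). Qed.

Lemma mul_flat_tr fx fy gx gy :
  (flat fx fy *m (flat gx gy)^T) 0 0 = \sum_i (fx i * gx i + fy i * gy i).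
Proof.
rewrite mxE sum_ord_double; apply: eq_bigr => i _.
by rewrite ![_^T _ _]mxE !(flat_x, flat_y).
Qed.

End Flattening.

Definition cross (R : pzRingType) (ux uy vx vy : R) := ux * vy - uy * vx.

Lemma cross_parallel2_eq0 (R : idomainType) (dx dy ux uy vx vy : R) :
  cross dx dy ux uy = 0 -> cross dx dy vx vy = 0 -> cross ux uy vx vy != 0 ->
  dx = 0 /\ dy = 0.
Proof.
move=> du0 dv0 uv_neq0.
have ex : cross ux uy vx vy * dx = ux * cross dx dy vx vy - vx * cross dx dy ux uy.
  by rewrite /cross; ring.
have ey : cross ux uy vx vy * dy = uy * cross dx dy vx vy - vy * cross dx dy ux uy.
  by rewrite /cross; ring.
rewrite du0 dv0 !mulr0 subr0 in ex ey.
by move/eqP: ex; move/eqP: ey; rewrite !mulf_eq0 (negbTE uv_neq0) => /eqP -> /eqP ->.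
Qed.

Lemma cross_eq0_trans (R : idomainType) (ux uy vx vy dx dy : R) :
  (dx != 0) || (dy != 0) -> cross ux uy dx dy = 0 -> cross vx vy dx dy = 0 ->
  cross ux uy vx vy = 0.
Proof.
move=> d_neq0 ud0 vd0; apply/eqP; apply: contraTT d_neq0 => uv_neq0.
have cross_swap a b c e : cross a b c e = - cross c e a b :> R.
  by rewrite /cross; ring.
have du0 : cross dx dy ux uy = 0 by rewrite cross_swap ud0 oppr0.
have dv0 : cross dx dy vx vy = 0 by rewrite cross_swap vd0 oppr0.
by have [-> ->] := cross_parallel2_eq0 du0 dv0 uv_neq0; rewrite eqxx.
Qed.

Lemma cross_eq0_scale (R : fieldType) (ux uy dx dy : R) :
  (dx != 0) || (dy != 0) -> cross ux uy dx dy = 0 ->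
  exists l, ux = l * dx /\ uy = l * dy.
Proof.
rewrite /cross => /orP [dx_neq0 | dy_neq0] /eqP; rewrite subr_eq0 => /eqP ud.
  by exists (ux / dx); split; [|apply: (mulIf dx_neq0); rewrite -ud]; field.
exists (uy / dy); split; last by field.
by apply: (mulIf dy_neq0); rewrite ud; field.
Qed.

Section Configuration.
Variables (R : idomainType) (n : nat) (x y : 'I_n -> R).

Definition parallel_increments (px py : 'I_n -> R) :=
  forall i j, cross (px i - px j) (py i - py j) (x i - x j) (y i - y j) = 0.

Definition area i j k := cross (x j - x i) (y j - y i) (x k - x i) (y k - y i).

Hypothesis distinct : forall i j, i != j -> (x i, y i) != (x j, y j).

Lemma sub_point_neq0 i j : i != j -> (x i - x j != 0) || (y i - y j != 0).
Proof.
move/distinct; apply: contraNT; rewrite negb_or !negbK !subr_eq0.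
by case/andP => /eqP -> /eqP ->.
Qed.

Lemma line_increment a b c :
  (forall i, a * x i + b * y i = c) ->
  forall i j, a * (x i - x j) + b * (y i - y j) = 0.
Proof. by move=> line i j; rewrite !mulrBr addrACA -opprD !line subrr. Qed.

Lemma parallel_increments_on_line a b c px py :
  (forall i, a * x i + b * y i = c) -> parallel_increments px py ->
  forall i j, a * px i + b * py i = a * px j + b * py j.
Proof.
move=> line par i j; apply/eqP; rewrite -subr_eq0; apply/eqP.
have [-> | ij] := eqVneq i j; first by rewrite subrr.
have normal : cross (- b) a (x i - x j) (y i - y j) = 0.
  by rewrite /cross -[RHS]oppr0 -(line_increment line i j); ring.
have := cross_eq0_trans (sub_point_neq0 ij) (par i j) normal.
by rewrite /cross => <-; ring.
Qed.

Lemma not_collinear_off_line i j :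
  i != j -> ~ collinear x y -> exists k, area i j k != 0.
Proof.
move=> ij not_line.
have [k ijk | area0] := pickP (fun k => area i j k != 0); first by exists k.
case: not_line; exists (y i - y j), (x j - x i), (y i * x j - x i * y j); split.
  by case/orP: (sub_point_neq0 ij) => ?; [right; rewrite -opprB oppr_eq0 | left].
move=> k; move/negbFE/eqP: (area0 k); rewrite /area /cross => ijk.
by apply/eqP; rewrite -subr_eq0 -ijk; apply/eqP; ring.
Qed.

Lemma parallel_increments_shift l a b px py :
  parallel_increments px py ->
  parallel_increments (fun k => px k - l * x k - a) (fun k => py k - l * y k - b).
Proof. by move=> par i j; rewrite -[RHS](par i j) /cross; ring. Qed.

Lemma parallel_increments_vanish px py i j k :
  parallel_increments px py -> px i = 0 -> py i = 0 -> px j = 0 -> py j = 0 ->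
  area i j k != 0 -> px k = 0 /\ py k = 0.
Proof.
move=> par pxi pyi pxj pyj ijk.
have := par k i; have := par k j; rewrite pxi pyi pxj pyj !subr0 => kj ki.
apply: cross_parallel2_eq0 ki kj _.
by apply: contra ijk => /eqP <-; apply/eqP; rewrite /area /cross; ring.
Qed.

End Configuration.

Lemma parallel_increments_affine (R : fieldType) n (x y px py : 'I_n -> R) i j k :
  (forall i j, i != j -> (x i, y i) != (x j, y j)) ->
  area x y i j k != 0 -> parallel_increments x y px py ->
  exists l a b, forall t, px t = l * x t + a /\ py t = l * y t + b.
Proof.
move=> distinct ijk par.
have ji : j != i by apply: contraNneq ijk => ->; rewrite /area /cross !subrr !mul0r subrr.
have [l [lx ly]] := cross_eq0_scale (sub_point_neq0 distinct ji) (par j i).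
(* Removing the dilation-translation that matches p on the edge ij leaves a
   field Q vanishing at i and j, hence at k; a point on the line ij other
   than i lies off the line ik. *)
pose a := px i - l * x i; pose b := py i - l * y i.
pose Qx t := px t - l * x t - a; pose Qy t := py t - l * y t - b.
have parQ : parallel_increments x y Qx Qy := parallel_increments_shift l a b par.
have Qxi : Qx i = 0 by rewrite /Qx /a; ring.
have Qyi : Qy i = 0 by rewrite /Qy /b; ring.
have Qxj : Qx j = 0.
  by rewrite -[RHS](subrr (px j - px i)) [X in _ = _ - X]lx /Qx /a; ring.
have Qyj : Qy j = 0.
  by rewrite -[RHS](subrr (py j - py i)) [X in _ = _ - X]ly /Qy /b; ring.
have [Qxk Qyk] := parallel_increments_vanish parQ Qxi Qyi Qxj Qyj ijk.
suff Q0 t : Qx t = 0 /\ Qy t = 0.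
  exists l, a, b => t; have [Qxt Qyt] := Q0 t.
  by split; apply/eqP; rewrite -subr_eq0 opprD addrA; apply/eqP.
have [ijt | /negbNE /eqP ijt0] := boolP (area x y i j t != 0).
  exact: parallel_increments_vanish parQ Qxi Qyi Qxj Qyj ijt.
have [-> | ti] := eqVneq t i; first by [].
apply: parallel_increments_vanish parQ Qxi Qyi Qxk Qyk _.
apply: contra ijk => /eqP ikt0; apply/eqP.
exact: cross_eq0_trans (sub_point_neq0 distinct ti) ijt0 ikt0.
Qed.

Definition momentum (R : pzRingType) n (m px py : 'I_n -> R) :=
  flat (fun k => m k * px k) (fun k => m k * py k).

Lemma twist_flat (R : pzRingType) n (m x y : 'I_n -> R) i j :
  twist m x y i j =
  flat (fun k => if k == i then m j * (y i - y j)
                 else if k == j then - (m i * (y i - y j)) else 0)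
       (fun k => if k == i then - (m j * (x i - x j))
                 else if k == j then m i * (x i - x j) else 0).
Proof.
have double_eq a b : (2 * a == 2 * b)%N = (a == b) by lia.
have even_odd a b : (2 * a == (2 * b).+1)%N = false by lia.
have odd_even a b : ((2 * a).+1 == 2 * b)%N = false by lia.
apply: flatP => k; rewrite (flat_x, flat_y) mxE /=.
  by rewrite !double_eq !even_odd.
by rewrite !odd_even !eqSS !double_eq.
Qed.

Lemma momentum_twist_dot (R : comPzRingType) n (m x y px py : 'I_n -> R) i j :
  i != j ->
  (momentum m px py *m (twist m x y i j)^T) 0 0 =
  m i * m j * cross (px i - px j) (py i - py j) (x i - x j) (y i - y j).
Proof.
move=> ij; rewrite twist_flat mul_flat_tr (bigD1 i) // (bigD1 j) 1?eq_sym //=.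
rewrite big1 => [|k /andP [ki kj]]; last by rewrite (negbTE ki) (negbTE kj) !mulr0 addr0.
by rewrite !eqxx [j == i]eq_sym (negbTE ij) /cross; ring.
Qed.

Definition twist_seq (R : pzRingType) n (m x y : 'I_n -> R) :=
  [seq twist m x y i j | i <- enum 'I_n, j <- [seq j <- enum 'I_n | j != i]].

Definition twist_matrix (R : pzRingType) n (m x y : 'I_n -> R) :=
  \matrix_(l < size (twist_seq m x y)) (twist_seq m x y)`_l.

Lemma dim_twist_span (R : fieldType) n (m x y : 'I_n -> R) :
  \dim (twist_span m x y) = \rank (twist_matrix m x y).
Proof. exact: dimv_span_rank. Qed.

Lemma mem_twist_seq (R : pzRingType) n (m x y : 'I_n -> R) v :
  v \in twist_seq m x y <-> exists i j, i != j /\ v = twist m x y i j.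
Proof.
split=> [/allpairsPdep [i [j [_ j_i ->]]] | [i [j [ij ->]]]].
  by exists i, j; move: j_i; rewrite mem_filter eq_sym => /andP [].
apply: (allpairs_f_dep (fun i j => twist m x y i j)); first by rewrite mem_enum.
by rewrite mem_filter mem_enum eq_sym ij.
Qed.

Section Twists.
Variables (R : fieldType) (n : nat) (m x y : 'I_n -> R).
Hypothesis m_neq0 : forall k, m k != 0.

Lemma momentum_eq0 px py : momentum m px py = 0 -> forall k, px k = 0 /\ py k = 0.
Proof.
move=> p0 k; have mk0 a : m k * a = 0 -> a = 0.
  by move/eqP; rewrite mulf_eq0 (negbTE (m_neq0 k)) => /eqP.
have := congr1 (fun u : 'rV[R]_(2 * n) => u 0 (xidx k)) p0.
have := congr1 (fun u : 'rV[R]_(2 * n) => u 0 (yidx k)) p0.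
by rewrite /= flat_x flat_y !mxE => /mk0 -> /mk0 ->.
Qed.

Lemma twist_kernelP u :
  u *m (twist_matrix m x y)^T = 0 <->
  exists px py, u = momentum m px py /\ parallel_increments x y px py.
Proof.
rewrite mulmx_tr_rows_eq0P; split=> [orth | [px [py [-> par]]] v]; last first.
  by case/mem_twist_seq => i [j [ij ->]]; rewrite momentum_twist_dot // par mulr0.
have u_momentum :
    u = momentum m (fun k => u 0 (xidx k) / m k) (fun k => u 0 (yidx k) / m k).
  by rewrite -[LHS]flat_coord; apply: eq_flat => k; rewrite mulrC divfK.
exists (fun k => u 0 (xidx k) / m k), (fun k => u 0 (yidx k) / m k); split => // i j.
have [-> | ij] := eqVneq i j; first by rewrite /cross; ring.
have twist_ij : twist m x y i j \in twist_seq m x y by apply/mem_twist_seq; exists i, j.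
have /eqP := orth _ twist_ij.
by rewrite {1}u_momentum momentum_twist_dot // !mulf_eq0 !(negbTE (m_neq0 _)) => /eqP.
Qed.

Hypothesis distinct : forall i j, i != j -> (x i, y i) != (x j, y j).

Lemma rank_twist_matrix_not_collinear :
  (1 < n)%N -> ~ collinear x y -> \rank (twist_matrix m x y) = (2 * n - 3)%N.
Proof.
move=> n_gt1 not_line.
pose i : 'I_n := Ordinal (ltnW n_gt1); pose j : 'I_n := Ordinal n_gt1.
have [k ijk] := not_collinear_off_line distinct (isT : i != j) not_line.
pose f (w : 'rV[R]_3) :=
  momentum m (fun t => w 0 0 * x t + w 0 1) (fun t => w 0 0 * y t + w 0 2).
apply: (@mxrank_kernel_image _ _ _ _ _ f).
- by move=> c w1 w2; apply/rowP => l; rewrite !mxE; case: ifP => _; ring.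
- move=> w /momentum_eq0 w0.
  have w00 : w 0 0 = 0.
    have wx : w 0 0 * (x i - x j) = 0.
      transitivity ((w 0 0 * x i + w 0 1) - (w 0 0 * x j + w 0 1)); first by ring.
      by rewrite (w0 i).1 (w0 j).1 subrr.
    have wy : w 0 0 * (y i - y j) = 0.
      transitivity ((w 0 0 * y i + w 0 2) - (w 0 0 * y j + w 0 2)); first by ring.
      by rewrite (w0 i).2 (w0 j).2 subrr.
    case/orP: (sub_point_neq0 distinct (isT : i != j)) => neq;
      [move/eqP: wx | move/eqP: wy]; by rewrite mulf_eq0 (negbTE neq) orbF => /eqP.
  have [w01 w02] := w0 i; rewrite w00 !mul0r !add0r in w01 w02.
  apply/rowP => r; rewrite mxE; case: r => [[|[|[|//]]] lt_r];
    [rewrite -w00 | rewrite -w01 | rewrite -w02]; congr (w 0 _); exact: val_inj.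
- move=> u; rewrite twist_kernelP; split=> [[px [py [-> par]]] | [w ->]].
    have [l [a [b affine]]] := parallel_increments_affine distinct ijk par.
    exists (\row_(r < 3) [:: l; a; b]`_r).
    by apply: eq_flat => t; rewrite !mxE /= ?(affine t).1 ?(affine t).2.
  exists (fun t => w 0 0 * x t + w 0 1), (fun t => w 0 0 * y t + w 0 2).
  by split=> // t1 t2; rewrite /cross; ring.
Qed.

Lemma rank_twist_matrix_collinear :
  (0 < n)%N -> collinear x y -> \rank (twist_matrix m x y) = (2 * n - (n + 1))%N.
Proof.
move=> n_gt0 [a [b [c [ab line]]]].
(* In the basis (-b, a), (ex, ey) of R^2, the second coordinate of p is
   <(a, b), p>, which the kernel condition makes independent of the point. *)
have [ex [ey unit_e]] : exists ex ey, a * ex + b * ey = 1.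
  by case: ab => [a0 | b0]; [exists a^-1, 0 | exists 0, b^-1];
    rewrite ?mulr0 ?add0r ?addr0 mulfV.
pose t (w : 'rV[R]_(n + 1)) k := w 0 (lshift 1 k).
pose s (w : 'rV[R]_(n + 1)) := w 0 (rshift n ord0).
pose f w := momentum m (fun k => - b * t w k + ex * s w) (fun k => a * t w k + ey * s w).
apply: (@mxrank_kernel_image _ _ _ _ _ f).
- move=> r w1 w2; apply/rowP => l; rewrite !mxE /t /s !mxE; case: ifP => _; ring.
- move=> w /momentum_eq0 w0.
  have s0 : s w = 0.
    have [wx wy] := w0 (Ordinal n_gt0).
    transitivity (a * (- b * t w (Ordinal n_gt0) + ex * s w)
                  + b * (a * t w (Ordinal n_gt0) + ey * s w)).
      by rewrite -[LHS]mul1r -unit_e; ring.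
    by rewrite wx wy !mulr0 addr0.
  have t0 k : t w k = 0.
    have [wx wy] := w0 k; rewrite s0 !mulr0 !addr0 in wx wy.
    by case: ab => neq; [move/eqP: wy | move/eqP: wx];
      rewrite mulf_eq0 ?oppr_eq0 (negbTE neq) => /eqP.
  rewrite -[w]hsubmxK -row_mx0; congr row_mx; apply/rowP => r; rewrite !mxE.
    exact: t0.
  by rewrite ord1; exact: s0.
- move=> u; rewrite twist_kernelP; split=> [[px [py [-> par]]] | [w ->]].
    have level := parallel_increments_on_line distinct line par.
    exists (row_mx (\row_k (ex * py k - ey * px k))
                   (const_mx (a * px (Ordinal n_gt0) + b * py (Ordinal n_gt0)))).
    apply: eq_flat => k /=; rewrite /t /s row_mxEl row_mxEr !mxE -(level k);
      by congr (_ * _); rewrite -[LHS]mulr1 -unit_e; ring.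
  exists (fun k => - b * t w k + ex * s w), (fun k => a * t w k + ey * s w).
  split=> // i j; rewrite -[RHS](mulr0 (- (t w i - t w j))) -(line_increment line i j) /cross.
  by ring.
Qed.

End Twists.

Theorem mainTheorem1 (R : realFieldType) (n : nat) (m x y : 'I_n -> R) :
  (2 <= n)%N ->
  (forall i, 0 < m i) ->
  (forall i j, i != j -> (x i, y i) != (x j, y j)) ->
  (collinear x y -> \dim (twist_span m x y) = (n - 1)%N) /\
  (~ collinear x y -> \dim (twist_span m x y) = (2 * n - 3)%N).
Proof.
move=> n_ge2 m_gt0 distinct; have m_neq0 k : m k != 0 by rewrite gt_eqF.
rewrite dim_twist_span; split=> [line | not_line].
  have n_gt0 : (0 < n)%N by lia.
  by rewrite (rank_twist_matrix_collinear m_neq0 distinct n_gt0 line); lia.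
exact: rank_twist_matrix_not_collinear.
Qed.
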